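(* Let $n\ge3$ and let $M^{2n-1}\subset U_n$ be the hypersurface consisting of non-degenerate $n$-gons with a fixed non-zero value of the area function $A$. Then at every point of $M$ the tangent space of $M$ is spanned by the vector fields tangent to the dual Birkhoff distribution $\mathcal F$ and their first commutators. Thus the bracket growth type of $\mathcal F$ on $M$ is $(n,2n-1)$.
   Context: $[\cdot,\cdot]$ is the determinant of two plane vectors; indices are cyclic. $G_n$ is the set of $n$-gons $(z_1,\dots,z_n)\in(\mathbb R^2)^n$ with $z_i\ne z_{i+1}$; $U_n\subset G_n$ is the open set of non-degenerate $n$-gons (no three consecutive vertices collinear). $A(z_1,\dots,z_n)=\sum_{i}[z_i,z_{i+1}]$ (twice the signed area). The dual Birkhoff distribution $\mathcal F$ on $G_n$: a tangent vector $W=(w_1,\dots,w_n)$ (velocities of the vertices) lies in $\mathcal F$ iff for each $i$ the induced motion of the line $z_iz_{i+1}$ is an infinitesimal rotation about the midpoint of $z_iz_{i+1}$; equivalently $[w_i+w_{i+1},z_{i+1}-z_i]=0$ for all $i$. $\mathcal F$ is $n$-dimensional and tangent to the level sets of $A$, hence defines a distribution on $M$. *)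

From HB Require Import structures.
From mathcomp Require Import all_boot all_order all_algebra.
From mathcomp Require Import all_classical all_reals all_analysis.
Set Implicit Arguments. Unset Strict Implicit. Unset Printing Implicit Defensive.
Import Order.TTheory GRing.Theory Num.Theory.
Import numFieldNormedType.Exports.
Local Open Scope classical_set_scope.
Local Open Scope ring_scope.

Section Polygons.
Variables (R : realType) (n : nat).

(* An n-gon (z_1,...,z_n) in (R^2)^n is an n x 2 matrix; row i is vertex z_i.
   Tangent vectors W = (w_1,...,w_n) live in the same space. *)
Definition ngon := 'M[R]_(n, 2).

Definition det2 (a b : 'rV[R]_2) : R := a 0 0 * b 0 1 - a 0 1 * b 0 0.

Definition vtx (z : ngon) (i : 'I_n) : 'rV[R]_2 := row i z.
Definition nxt (i : 'I_n) : 'I_n := ordS i.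

Definition G_n : set ngon := [set z | forall i, vtx z i <> vtx z (nxt i)].

Definition U_n : set ngon :=
  [set z | G_n z /\ forall i,
     det2 (vtx z (nxt i) - vtx z i) (vtx z (nxt (nxt i)) - vtx z (nxt i)) != 0].

Definition area (z : ngon) : R := \sum_(i < n) det2 (vtx z i) (vtx z (nxt i)).

Definition birkhoffF (z : ngon) : set ngon :=
  [set W | forall i, det2 (vtx W i + vtx W (nxt i)) (vtx z (nxt i) - vtx z i) = 0].

Definition Mhyp (c : R) : set ngon := [set z | U_n z /\ area z = c].

Definition tangentM (z : ngon) : set ngon := [set W | 'D_W area z = 0].

Definition iter_dir (vs : seq ngon) (X : ngon -> ngon) : ngon -> ngon :=
  foldr (fun v g => fun x => 'D_v g x) X vs.

Definition smooth_on (U : set ngon) (X : ngon -> ngon) : Prop :=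
  forall vs : seq ngon, forall x, U x -> differentiable (iter_dir vs X) x.

Definition F_field (c : R) (z : ngon) (X : ngon -> ngon) : Prop :=
  exists U : set ngon, [/\ open U, U z, smooth_on U X &
    forall y, U y -> Mhyp c y -> birkhoffF y (X y)].

Definition lie (X Y : ngon -> ngon) (z : ngon) : ngon :=
  'D_(X z) Y z - 'D_(Y z) X z.

Definition gen_set (c : R) (z : ngon) : set ngon :=
  [set v | (exists X, F_field c z X /\ v = X z) \/
           (exists X Y, [/\ F_field c z X, F_field c z Y & v = lie X Y z])].

Definition in_span (S : set ngon) (W : ngon) : Prop :=
  exists (k : nat) (a : 'I_k -> R) (v : 'I_k -> ngon),
    (forall j, S (v j)) /\ W = \sum_(j < k) a j *: v j.

End Polygons.

From HB Require Import structures.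
From mathcomp Require Import all_boot all_order all_algebra.
From mathcomp Require Import all_classical all_reals all_analysis.
From mathcomp Require Import ring zify.
Set Implicit Arguments.
Unset Strict Implicit.
Unset Printing Implicit Defensive.
Import Order.TTheory GRing.Theory Num.Theory.
Import numFieldNormedType.Exports.
Local Open Scope classical_set_scope.
Local Open Scope ring_scope.

(* The tangent space of [M] at [z] is the kernel of [dA(z) = area_form z], and
   [area_form z W] is the sum of the [n] Birkhoff constraints [birkhoff_form i z W].
   Hence every vector of [F] is tangent to [M]. For two fields [X], [Y] tangent to [F]
   along [M], the function [p |-> area_form p (Y p)] vanishes on [M]; differentiating it
   along [X z] inside [M] (a curve in [M] with any tangent velocity exists since [c != 0])
   and using the symmetry of [area_form] gives [area_form z [X, Y] = 0].
   Conversely, [F(z)] is spanned by the values of the polynomial fields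
   [birkhoff_field j], and the bracket of two consecutive ones violates only the
   constraints of the edges [j] and [j+1], by opposite non-zero amounts. These brackets
   therefore realise every constraint vector of sum zero, so that any tangent [W] can be
   corrected into a vector of [F(z)] by subtracting a combination of them. *)

Section CyclicIndex.
Variable n : nat.
Implicit Types i j : 'I_n.

Definition prv i : 'I_n := ord_pred i.

Lemma nxtK : cancel (@nxt n) prv. Proof. exact: ordSK. Qed.
Lemma prvK : cancel prv (@nxt n). Proof. exact: ord_predK. Qed.
Lemma nxt_inj : injective (@nxt n). Proof. exact: can_inj nxtK. Qed.

Lemma eq_nxt_prv i j : (i == nxt j) = (prv i == j).
Proof. by apply/eqP/eqP => [->|<-]; rewrite ?nxtK ?prvK. Qed.

Lemma sum_nxt (V : nmodType) (F : 'I_n -> V) : \sum_i F (nxt i) = \sum_i F i.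
Proof. by rewrite [RHS](reindex_inj nxt_inj). Qed.

Lemma nxt_val i : nat_of_ord (nxt i) = if i.+1 == n then 0%N else i.+1.
Proof.
rewrite /=; case: eqP => [->|ne]; first exact: modnn.
by rewrite modn_small //; have := ltn_ord i; lia.
Qed.

Lemma prv_val i : nat_of_ord (prv i) = if nat_of_ord i == 0%N then n.-1 else i.-1.
Proof.
rewrite /=; have := ltn_ord i; case: eqP => [->|ne] lt_in.
  by rewrite modn_small; lia.
by rewrite -subn1 -addnBAC ?lt0n ?modnDr ?modn_small //; lia.
Qed.

Lemma nxt_neq i : (1 < n)%N -> nxt i != i.
Proof.
move=> n1; apply/eqP => /(congr1 (@nat_of_ord n)); rewrite nxt_val.
by have := ltn_ord i; case: (i.+1 =P n); lia.
Qed.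

Lemma nxt2_neq i : (2 < n)%N -> nxt (nxt i) != i.
Proof.
move=> n2; apply/eqP => /(congr1 (@nat_of_ord n)); rewrite !nxt_val; have := ltn_ord i.
by case: (i.+1 =P n) => /=; [case: (1 =P n) | case: (i.+2 =P n)]; lia.
Qed.

Lemma cyclic_difference (V : zmodType) (l : 'I_n -> V) :
  \sum_i l i = 0 -> exists c : 'I_n -> V, forall i, c i - c (prv i) = l i.
Proof.
move=> l_sum0; exists (fun j => \sum_(k < n | (k <= j)%N) l k) => i.
rewrite prv_val (bigD1 i) //=; have := ltn_ord i; case: eqP => [i0|i_gt0] lt_in.
  rewrite big_pred0 => [|k]; last by rewrite i0 -val_eqE /= andbC; case: eqP; lia.
  by rewrite addr0 (eq_bigl predT) ?l_sum0 ?subr0 // => k /=; have := ltn_ord k; lia.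
rewrite (eq_bigl (fun k : 'I_n => (k <= i.-1)%N)) ?addrK // => k.
by rewrite -val_eqE /=; case: eqP; lia.
Qed.

Lemma sum_cyclic_difference (V : pzRingType) (d : 'I_n -> V) i :
  \sum_j d j * ((i == j)%:R - (i == nxt j)%:R) = d i - d (prv i).
Proof.
have pick k : \sum_j d j * (k == j)%:R = d k.
  rewrite (bigD1 k) //= eqxx mulr1 big1 ?addr0 // => j.
  by rewrite eq_sym => /negbTE ->; rewrite mulr0.
rewrite -pick -[d (prv i)]pick -sumrB; apply: eq_bigr => j _.
by rewrite eq_nxt_prv mulrBr.
Qed.

End CyclicIndex.
Arguments nxt_inj {n}.

Section LinearForm.
Variables (R : comNzRingType) (V : lmodType R) (f : V -> R).
Hypothesis f_lin : linear_for *%R f.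

Let fL : {linear V -> R | *%R} := HB.pack f (GRing.isLinear.Build R V R *%R f f_lin).

Lemma linear_form_sum I r (P : pred I) (F : I -> V) :
  f (\sum_(i <- r | P i) F i) = \sum_(i <- r | P i) f (F i).
Proof. exact: (linear_sum fL). Qed.

Lemma linear_formZ a v : f (a *: v) = a * f v.
Proof. exact: (linearZ_LR fL). Qed.

Lemma linear_formB u v : f (u - v) = f u - f v.
Proof. exact: (linearB fL). Qed.

End LinearForm.

Lemma ord2_cases (c : 'I_2) : c = 0 \/ c = 1.
Proof. by case: c => -[|[|//]] ?; [left|right]; apply: val_inj. Qed.

Lemma det2_decomposition (R : realType) (e f w : 'rV[R]_2) : det2 e f != 0 ->
  w = (det2 w f / det2 e f) *: e - (det2 w e / det2 e f) *: f.
Proof.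
rewrite {1}/det2 => nz; apply/rowP => c; rewrite !mxE.
by case: (ord2_cases c) => ->; rewrite /det2; field.
Qed.

Section MatrixCalculus.
Variables (R : realType) (V : normedModType R) (m k : nat).
Local Notation M := 'M[R]_(m, k).
Implicit Types (z x : V) (f g : V -> M).

Lemma linear_form_entriesE (L : M -> R) : linear_for *%R L ->
  forall w, L w = \sum_a \sum_b w a b * L (delta_mx a b).
Proof.
move=> hL w; rewrite {1}(matrix_sum_delta w) linear_form_sum //.
by apply: eq_bigr => a _; rewrite linear_form_sum //; apply: eq_bigr => b _; rewrite linear_formZ.
Qed.

Lemma sum_entries_funE (F : 'I_m -> 'I_k -> V -> R) :
  (fun p => \sum_a \sum_b F a b p) = \sum_a \sum_b F a b.
Proof. by apply/funext => p; rewrite fct_sumE; under [RHS]eq_bigr do rewrite fct_sumE. Qed.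

Lemma differentiable_entry g z a b :
  differentiable g z -> differentiable (fun p => g p a b) z.
Proof. by move=> dg; apply: (differentiable_comp dg (differentiable_coord _ a b)). Qed.

Lemma derive_entry g z x a b :
  derivable g z x -> 'D_x (fun p => g p a b) z = 'D_x g z a b.
Proof. by move=> dg; rewrite (derive_mx dg) mxE. Qed.

Lemma differentiable_entries g z :
  (forall a b, differentiable (fun p => g p a b) z) -> differentiable g z.
Proof.
move=> dg; have -> : g = \sum_a \sum_b (fun p => g p a b *: (delta_mx a b : M)).
  apply/funext => p; rewrite {1}(matrix_sum_delta (g p)) fct_sumE.
  by under [RHS]eq_bigr do rewrite fct_sumE.
by do 2 (apply: differentiable_sum => ?); apply/differentiableZl/dg.
Qed.

Section LinearFormComp.
Variable L : M -> R.
Hypothesis L_lin : linear_for *%R L.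

Let L_compE g : (fun p => L (g p)) = \sum_a \sum_b (fun p => g p a b * L (delta_mx a b)).
Proof. by rewrite -sum_entries_funE; apply/funext => p; rewrite linear_form_entriesE. Qed.

Lemma differentiable_linear_form_comp g z :
  differentiable g z -> differentiable (fun p => L (g p)) z.
Proof.
move=> dg; rewrite L_compE; do 2 (apply: differentiable_sum => ?).
exact/differentiableM/differentiable_cst/differentiable_entry.
Qed.

Lemma derive_linear_form_comp g z x :
  differentiable g z -> 'D_x (fun p => L (g p)) z = L ('D_x g z).
Proof.
move=> dg; have dgab a b := differentiable_entry a b dg.
rewrite L_compE derive_sum => [|a]; last first.
  by apply/diff_derivable; apply: differentiable_sum => b; exact/differentiableM.
rewrite [RHS]linear_form_entriesE //; apply: eq_bigr => a _.
rewrite derive_sum => [|b]; last exact/diff_derivable/differentiableM.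
apply: eq_bigr => b _; rewrite deriveM ?derive_cst ?derive_entry.
  by rewrite /GRing.scale /=; ring.
all: exact: diff_derivable.
Qed.

End LinearFormComp.

Section BilinearComp.
Variable beta : M -> M -> R.
Hypotheses (beta_linl : forall w, linear_for *%R (beta^~ w))
           (beta_linr : forall p, linear_for *%R (beta p)).

Let beta_compE f g : (fun p => beta (f p) (g p)) =
  \sum_a \sum_b (fun p => f p a b * beta (delta_mx a b) (g p)).
Proof.
by rewrite -sum_entries_funE; apply/funext => p; rewrite (linear_form_entriesE (beta_linl _)).
Qed.

Lemma differentiable_bilinear_comp f g z : differentiable f z -> differentiable g z ->
  differentiable (fun p => beta (f p) (g p)) z.
Proof.
move=> df dg; rewrite beta_compE; do 2 (apply: differentiable_sum => ?).
by apply: differentiableM; [exact: differentiable_entry | exact: differentiable_linear_form_comp].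
Qed.

Lemma derive_bilinear_comp f g z x : differentiable f z -> differentiable g z ->
  'D_x (fun p => beta (f p) (g p)) z = beta ('D_x f z) (g z) + beta (f z) ('D_x g z).
Proof.
move=> df dg; have dfab a b := differentiable_entry a b df.
have dLg a b := differentiable_linear_form_comp (beta_linr (delta_mx a b)) dg.
rewrite beta_compE derive_sum => [|a]; last first.
  by apply/diff_derivable; apply: differentiable_sum => b; exact/differentiableM.
rewrite !(linear_form_entriesE (beta_linl _)) -big_split; apply: eq_bigr => a _.
rewrite derive_sum => [|b]; last exact/diff_derivable/differentiableM.
rewrite -big_split; apply: eq_bigr => b _.
rewrite deriveM ?derive_entry ?derive_linear_form_comp //.
  by rewrite /GRing.scale /=; ring.
all: exact: diff_derivable.
Qed.

End BilinearComp.
End MatrixCalculus.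

Section PolynomialFunctions.
Variables (R : realType) (m k : nat).
Local Notation M := 'M[R]_(m, k).

Inductive polyfun : (M -> R) -> Prop :=
| polyfun_cst c : polyfun (fun=> c)
| polyfun_entry a b : polyfun (fun p => p a b)
| polyfun_add f g : polyfun f -> polyfun g -> polyfun (fun p => f p + g p)
| polyfun_mul f g : polyfun f -> polyfun g -> polyfun (fun p => f p * g p).

Lemma polyfun_ext f g : f =1 g -> polyfun f -> polyfun g.
Proof. by move=> /funext ->. Qed.

Lemma polyfun_sub f g : polyfun f -> polyfun g -> polyfun (fun p => f p - g p).
Proof.
move=> pf pg; apply: polyfun_ext (polyfun_add pf (polyfun_mul (polyfun_cst (-1)) pg)) => p.
by rewrite mulN1r.
Qed.

Lemma differentiable_polyfun f z : polyfun f -> differentiable f z.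
Proof.
elim=> [c|a b|{}f g _ df _ dg|{}f g _ df _ dg].
- exact: differentiable_cst.
- exact: differentiable_coord.
- exact: differentiableD.
- exact: differentiableM.
Qed.

Lemma polyfun_derive f (x : M) : polyfun f -> polyfun (fun z => 'D_x f z).
Proof.
have dP g z : polyfun g -> derivable g z x.
  by move=> pg; exact/diff_derivable/differentiable_polyfun.
elim=> [c|a b|{}f g pf Pf pg Pg|{}f g pf Pf pg Pg].
- by apply: polyfun_ext (polyfun_cst 0) => z; rewrite derive_cst.
- apply: polyfun_ext (polyfun_cst (x a b)) => z.
  by rewrite (@derive_entry _ _ _ _ id) ?derive_id //; exact: derivable_id.
- apply: polyfun_ext (polyfun_add Pf Pg) => z.
  by rewrite -deriveD //; exact: dP.
- apply: polyfun_ext (polyfun_add (polyfun_mul pf Pg) (polyfun_mul pg Pf)) => z.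
  by rewrite -[RHS]/('D_x (f * g) z) deriveM //; exact: dP.
Qed.

Definition polyfield m' k' (X : M -> 'M[R]_(m', k')) := forall a b, polyfun (fun p => X p a b).

Lemma differentiable_polyfield m' k' (X : M -> 'M[R]_(m', k')) (z : M) :
  polyfield X -> differentiable X z.
Proof. by move=> pX; apply: differentiable_entries => a b; apply: differentiable_polyfun. Qed.

Lemma polyfield_derive m' k' (X : M -> 'M[R]_(m', k')) v :
  polyfield X -> polyfield (fun z => 'D_v X z).
Proof.
move=> pX a b; apply: polyfun_ext (polyfun_derive v (pX a b)) => z.
by rewrite derive_entry //; exact/diff_derivable/differentiable_polyfield.
Qed.

End PolynomialFunctions.
Arguments polyfun_cst {R m k}.
Arguments polyfun_entry {R m k}.

Lemma derive_eq0_along_curve (R : realType) (V W : normedModType R) (g : V -> W) z x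
    (gamma : R -> V) :
  differentiable g z -> gamma 0 = z -> differentiable gamma 0 -> 'D_1 gamma 0 = x ->
  (\forall t \near 0, g (gamma t) = 0) -> 'D_x g z = 0.
Proof.
move=> dg gamma0 dgamma <- g_gamma0; rewrite -gamma0 in dg *.
have dc : differentiable (g \o gamma) 0 := differentiable_comp dgamma dg.
have : 'D_1 (g \o gamma) 0 = 0 by rewrite (near_eq_derive _ (g := cst 0)) ?derive_cst.
by rewrite !deriveE // diff_comp.
Qed.

Lemma derive_scalel (R : realType) (V W : normedModType R) (k : V -> R) (w : W) z v :
  differentiable k z -> 'D_v (fun p => k p *: w) z = 'D_v k z *: w.
Proof. by move=> dk; rewrite !deriveE ?diffZl //; exact: differentiableZl. Qed.

Lemma line_correction_curve (R : realType) (V : normedModType R) (z x u : V) (s : R -> R) :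
  differentiable s 0 -> s 0 = 0 -> 'D_1 s 0 = 0 ->
  let gamma t := z + t *: x + s t *: u in
  [/\ gamma 0 = z, differentiable gamma 0 & 'D_1 gamma 0 = x].
Proof.
move=> ds s0 Ds gamma.
have dline : differentiable (fun t : R => t *: x) 0 by exact: differentiableZl.
have dcorr : differentiable (fun t => s t *: u) 0 by exact: differentiableZl.
split.
- by rewrite /gamma s0 !scale0r !addr0.
- by apply: differentiableD => //; apply: differentiableD.
have -> : gamma = cst z + (fun t => t *: x) + (fun t => s t *: u) by rewrite !addrfctE.
have Dline : 'D_1 (fun t : R => t *: x) 0 = x by rewrite deriveE ?diff_val ?scale1r.
have Dcorr : 'D_1 (fun t : R => s t *: u) 0 = 0.
  by apply: etrans (derive_scalel _ _ ds) _; rewrite Ds scale0r.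
rewrite !deriveD ?derive_cst ?Dline ?Dcorr ?add0r ?addr0; first exact: erefl.
- exact: derivable_cst.
- exact: diff_derivable dline.
- exact: diff_derivable (differentiableD (differentiable_cst _ _) dline).
- exact: diff_derivable dcorr.
Qed.

Section Polygons.
Variables (R : realType) (n : nat).
Local Notation ngon := (ngon R n).
Local Notation nxt := (@nxt n).
Local Notation prv := (@prv n).
Implicit Types (p q w x y z u W : ngon) (i j : 'I_n).

Definition edge p i : 'rV[R]_2 := vtx p (nxt i) - vtx p i.
Definition turn p i : R := det2 (edge p i) (edge p (nxt i)).

Lemma U_nE z : U_n z <-> forall i, turn z i != 0.
Proof.
split=> [[] //|nz]; split=> // i zi; move: (nz i).
by rewrite /turn /edge -zi subrr /det2 !mxE !mul0r subrr eqxx.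
Qed.

Lemma polyfun_edge i c : polyfun (fun p : ngon => edge p i 0 c).
Proof.
apply: polyfun_ext (polyfun_sub (polyfun_entry (nxt i) c) (polyfun_entry i c)) => p.
by rewrite /edge !mxE.
Qed.

Lemma polyfun_turn i : polyfun (fun p => turn p i).
Proof.
exact: polyfun_sub (polyfun_mul (polyfun_edge i 0) (polyfun_edge (nxt i) 1))
                   (polyfun_mul (polyfun_edge i 1) (polyfun_edge (nxt i) 0)).
Qed.

Lemma U_n_near z : U_n z -> \forall p \near z, U_n p.
Proof.
move=> /U_nE nz; have near_turn i : \forall p \near z, turn p i != 0.
  have turn_cont := differentiable_continuous (differentiable_polyfun z (polyfun_turn i)).
  exact: cvgr_neq0 turn_cont (nz i).
by apply: filterS (filter_forall _ near_turn) => p /U_nE.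
Qed.

Definition birkhoff_form i p w : R := det2 (vtx w i + vtx w (nxt i)) (edge p i).
Definition area_cross p w : R := \sum_i det2 (vtx p i) (vtx w (nxt i)).
Definition area_form p w : R := area_cross p w + area_cross w p.

Lemma birkhoff_form_linl i w : linear_for *%R (birkhoff_form i ^~ w).
Proof. by move=> a p q; rewrite /birkhoff_form /edge /det2 /vtx !mxE; ring. Qed.

Lemma birkhoff_form_linr i p : linear_for *%R (birkhoff_form i p).
Proof. by move=> a w q; rewrite /birkhoff_form /edge /det2 /vtx !mxE; ring. Qed.

Lemma area_cross_linl w : linear_for *%R (area_cross ^~ w).
Proof.
move=> a p q; rewrite /area_cross mulr_sumr -big_split; apply: eq_bigr => i _ /=.
by rewrite /det2 /vtx !mxE; ring.
Qed.

Lemma area_cross_linr p : linear_for *%R (area_cross p).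
Proof.
move=> a w q; rewrite /area_cross mulr_sumr -big_split; apply: eq_bigr => i _ /=.
by rewrite /det2 /vtx !mxE; ring.
Qed.

Lemma area_formC p w : area_form p w = area_form w p.
Proof. exact: addrC. Qed.

Lemma area_form_linr p : linear_for *%R (area_form p).
Proof.
move=> a w q; rewrite /area_form area_cross_linr.
have -> := area_cross_linl p a w q; ring.
Qed.

Lemma area_form_linl w : linear_for *%R (area_form ^~ w).
Proof. by move=> a p q; rewrite /= !(area_formC _ w) area_form_linr. Qed.

Lemma sum_birkhoff_form p w : \sum_i birkhoff_form i p w = area_form p w.
Proof.
pose G i := det2 (vtx w i) (vtx p i).
have -> : \sum_i birkhoff_form i p w = area_form p w + (\sum_i G (nxt i) - \sum_i G i).
  rewrite /area_form /area_cross -sumrB -!big_split; apply: eq_bigr => i _ /=.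
  by rewrite /birkhoff_form /G /edge /det2 /vtx !mxE; ring.
by rewrite sum_nxt subrr addr0.
Qed.

Lemma area_form_diag p : area_form p p = 2 * area p.
Proof. by rewrite /area_form mulr_natl mulr2n. Qed.

Lemma derive_area z x : 'D_x (@area R n) z = area_form z x.
Proof.
have did : differentiable id z by [].
have -> : @area R n = fun p => area_cross p p by [].
by rewrite (derive_bilinear_comp area_cross_linl area_cross_linr x did did) derive_id addrC.
Qed.

Lemma tangentME z W : tangentM z W <-> area_form z W = 0.
Proof. by rewrite /tangentM /= derive_area. Qed.

Lemma area_expand z x u t s : area (z + t *: x + s *: u) =
  area z + t * area_form z x + t ^+ 2 * area x + s * (area_form z u + t * area_form x u)
  + s ^+ 2 * area u.
Proof.
rewrite /area /area_form /area_cross !mulrDr !mulr_sumr -!big_split; apply: eq_bigr => i _ /=.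
by rewrite /det2 /vtx !mxE; ring.
Qed.

Lemma area_delta a b : area (delta_mx a b : ngon) = 0.
Proof.
rewrite /area big1 // => i _; rewrite /det2 /vtx !mxE.
by case: (ord2_cases b) => ->; rewrite /= !andbF mulr0 mul0r subr0.
Qed.

(* Single-entry matrices have zero area and span, and [area_form z z = 2 * area z]. *)
Lemma exists_null_transversal z : area z != 0 ->
  exists u, area u = 0 /\ area_form z u != 0.
Proof.
move=> z_nz; case: (pselect (exists a b, area_form z (delta_mx a b) != 0)).
  by move=> [a [b nz]]; exists (delta_mx a b); split; first exact: area_delta.
move=> none; have {}none a b : area_form z (delta_mx a b) = 0.
  by apply/eqP; apply: contra_notT none => nz; exists a, b.
have : area_form z z = 0.
  rewrite (linear_form_entriesE (area_form_linr z)) big1 // => a _.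
  by rewrite big1 // => b _; rewrite none mulr0.
by rewrite area_form_diag => /eqP; rewrite mulf_eq0 pnatr_eq0 (negbTE z_nz).
Qed.

Lemma level_curve z x u : area_form z x = 0 -> area u = 0 -> area_form z u != 0 ->
  exists gamma : R -> ngon, [/\ gamma 0 = z, differentiable gamma 0, 'D_1 gamma 0 = x &
    \forall t \near 0, area (gamma t) = area z].
Proof.
move=> zx0 u0 zu_nz.
(* [z + t x + s t u] stays on the level set when [s t * q t = - t ^+ 2 * area x]. *)
pose q t := area_form z u + t * area_form x u.
pose sigma t := - (t * area x) / q t.
pose s t := t * sigma t.
have q0 : q 0 != 0 by rewrite /q mul0r addr0.
have dq : differentiable q 0 by [].
have dsigma : differentiable sigma 0.
  by apply: differentiableM => //; exact: differentiableV.
have sigma0 : sigma 0 = 0 by rewrite /sigma (mul0r (area x)) oppr0 mul0r.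
have Ds : 'D_1 s 0 = 0.
  rewrite -[s]/((fun t => t) * sigma) deriveM.
    by rewrite sigma0 !scale0r addr0.
  - exact: derivable_id.
  - exact: diff_derivable.
have ds : differentiable s 0 by exact: differentiableM.
have /= [gamma0 dgamma Dgamma] := line_correction_curve z x u ds (mul0r _) Ds.
exists (fun t => z + t *: x + s t *: u); split => //.
near=> t.
have qt_nz : q t != 0.
  by near: t; exact: cvgr_neq0 (differentiable_continuous dq) q0.
rewrite area_expand zx0 u0 /s /sigma.
by move: qt_nz; rewrite /q => qt_nz; field.
Unshelve. all: by end_near. Qed.

Lemma polyfield_smooth (U : set ngon) (X : ngon -> ngon) : polyfield X -> smooth_on U X.
Proof.
move=> pX vs p _; apply: differentiable_polyfield.
by elim: vs => [|v vs IH] //=; exact: polyfield_derive.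
Qed.

Lemma F_field_differentiable c z X : F_field c z X -> differentiable X z.
Proof. by case=> U [_ Uz sX _]; exact: sX [::] z Uz. Qed.

Lemma F_field_tangent c z X : Mhyp c z -> F_field c z X -> area_form z (X z) = 0.
Proof.
move=> Mz [U [_ Uz _ FX]].
by rewrite -sum_birkhoff_form big1 // => i _; exact: FX z Uz Mz i.
Qed.

Lemma derive_area_form_F_field_eq0 c z Y x : c != 0 -> Mhyp c z -> F_field c z Y ->
  area_form z x = 0 -> 'D_x (fun p => area_form p (Y p)) z = 0.
Proof.
move=> c_nz [Un_z Az] FY zx0; have dY := F_field_differentiable FY.
case: FY => U [oU Uz _ FY].
have [u [u0 zu_nz]] : exists u, area u = 0 /\ area_form z u != 0.
  by apply: exists_null_transversal; rewrite Az.
have [gamma [gamma0 dgamma Dgamma area_gamma]] := level_curve zx0 u0 zu_nz.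
have did : differentiable id z by [].
apply: (derive_eq0_along_curve _ gamma0 dgamma Dgamma).
  apply: (differentiable_bilinear_comp area_form_linl area_form_linr did dY).
have gamma_cvg : gamma @ 0 --> z by rewrite -gamma0; exact: differentiable_continuous.
have U_near : \forall p \near z, U p by apply: open_nbhs_nbhs; split.
near=> t.
have [Ut Un_t] : U (gamma t) /\ U_n (gamma t).
  near: t; apply: (gamma_cvg (fun p => U p /\ U_n p)).
  by near=> p; split; near: p; [exact: U_near | exact: U_n_near].
have At : area (gamma t) = c by rewrite -Az; near: t; exact: area_gamma.
by rewrite -sum_birkhoff_form big1 // => i _; exact: FY _ Ut (conj Un_t At) i.
Unshelve. all: by end_near. Qed.

Lemma lie_F_field_tangent c z X Y : c != 0 -> Mhyp c z -> F_field c z X -> F_field c z Y ->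
  area_form z (lie X Y z) = 0.
Proof.
move=> c_nz Mz FX FY; have did : differentiable id z by [].
have DY := derive_area_form_F_field_eq0 c_nz Mz FY (F_field_tangent Mz FX).
have DX := derive_area_form_F_field_eq0 c_nz Mz FX (F_field_tangent Mz FY).
rewrite (derive_bilinear_comp area_form_linl area_form_linr _ did
  (F_field_differentiable FY)) derive_id in DY.
rewrite (derive_bilinear_comp area_form_linl area_form_linr _ did
  (F_field_differentiable FX)) derive_id in DX.
rewrite /lie (linear_formB (area_form_linr z)).
move/eqP: DY; rewrite addrC addr_eq0 => /eqP ->.
move/eqP: DX; rewrite addrC addr_eq0 => /eqP ->.
by rewrite area_formC subrr.
Qed.

Lemma gen_set_tangent c z v : c != 0 -> Mhyp c z -> gen_set c z v -> area_form z v = 0.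
Proof.
move=> c_nz Mz [[X [FX ->]]|[X [Y [FX FY ->]]]].
  exact: F_field_tangent Mz FX.
exact: lie_F_field_tangent c_nz Mz FX FY.
Qed.

Lemma in_span_linear_form (S : set ngon) (f : ngon -> R) W : linear_for *%R f ->
  (forall v, S v -> f v = 0) -> in_span S W -> f W = 0.
Proof.
move=> f_lin fS [k [a [v [Sv ->]]]]; rewrite linear_form_sum // big1 // => j _.
by rewrite linear_formZ // fS // mulr0.
Qed.

Lemma in_spanD (S : set ngon) v w : in_span S v -> in_span S w -> in_span S (v + w).
Proof.
move=> [k [a [v' [Sv ->]]]] [l [b [w' [Sw ->]]]].
pose coef h := match fintype.split h with inl h => a h | inr h => b h end.
pose vec h := match fintype.split h with inl h => v' h | inr h => w' h end.
exists (k + l)%N, coef, vec; split; first by move=> h; rewrite /vec; case: fintype.split.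
rewrite big_split_ord; congr (_ + _); apply: eq_bigr => h _.
  by rewrite /coef /vec (unsplitK (inl h)).
by rewrite /coef /vec (unsplitK (inr h)).
Qed.

Lemma birkhoff_form_derive_field i (X : ngon -> ngon) z x :
  (forall p, birkhoffF p (X p)) -> differentiable X z ->
  birkhoff_form i z ('D_x X z) = - birkhoff_form i x (X z).
Proof.
move=> FX dX; have did : differentiable id z by [].
have := derive_bilinear_comp (birkhoff_form_linl i) (birkhoff_form_linr i) x did dX.
rewrite derive_id (_ : 'D_x _ z = 0) => [/esym/eqP|].
  by rewrite addrC addr_eq0 => /eqP.
by rewrite (_ : (fun p => _) = cst 0) ?derive_cst //; apply/funext => p; exact: FX.
Qed.

Lemma birkhoff_form_lie i (X Y : ngon -> ngon) z :
  (forall p, birkhoffF p (X p)) -> (forall p, birkhoffF p (Y p)) ->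
  differentiable X z -> differentiable Y z ->
  birkhoff_form i z (lie X Y z) = birkhoff_form i (Y z) (X z) - birkhoff_form i (X z) (Y z).
Proof.
move=> FX FY dX dY; rewrite /lie (linear_formB (birkhoff_form_linr i z)).
by rewrite !birkhoff_form_derive_field // opprK addrC.
Qed.

Lemma birkhoff_form_antisym i x y :
  birkhoff_form i y x - birkhoff_form i x y =
  2 * (det2 (vtx x (nxt i)) (vtx y (nxt i)) - det2 (vtx x i) (vtx y i)).
Proof. by rewrite /birkhoff_form /edge /det2 /vtx !mxE; ring. Qed.

End Polygons.
Arguments polyfun_edge {R n}.
Arguments polyfun_turn {R n}.

Section BirkhoffFields.
Variables (R : realType) (n : nat).
Hypothesis n_ge3 : (3 <= n)%N.
Local Notation ngon := (ngon R n).
Local Notation nxt := (@nxt n).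
Local Notation prv := (@prv n).
Implicit Types (p z W : ngon) (i j k : 'I_n).

Let nxt_eqF i : (nxt i == i) = false.
Proof. by apply/negbTE/nxt_neq; lia. Qed.

Let eq_nxtF i : (i == nxt i) = false.
Proof. by rewrite eq_sym nxt_eqF. Qed.

Let nxt2_eqF i : (nxt (nxt i) == i) = false.
Proof. by apply/negbTE/nxt2_neq; lia. Qed.

Let eq_nxt2F i : (i == nxt (nxt i)) = false.
Proof. by rewrite eq_sym nxt2_eqF. Qed.

Let prv_eqF i : (prv i == i) = false.
Proof. by rewrite -(inj_eq nxt_inj) prvK eq_nxtF. Qed.

(* [z_j] slides along the line of edge [j-1] and [z_(j+1)] along that of edge [j+1],
   with speeds making edge [j] turn about its midpoint. *)
Definition birkhoff_field j p : ngon := \matrix_i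
  (if i == j then turn p j *: edge p (prv j)
   else if i == nxt j then turn p (prv j) *: edge p (nxt j) else 0).

Lemma vtx_birkhoff_field j p i : vtx (birkhoff_field j p) i =
  if i == j then turn p j *: edge p (prv j)
  else if i == nxt j then turn p (prv j) *: edge p (nxt j) else 0.
Proof. exact: rowK. Qed.

Lemma birkhoff_fieldP j p : birkhoffF p (birkhoff_field j p).
Proof.
move=> i; rewrite !vtx_birkhoff_field.
have [->|ij] := eqVneq i j; first by rewrite nxt_eqF eqxx /turn /edge prvK /det2 !mxE; ring.
have [<-|nij] := eqVneq (nxt i) j; first by rewrite eq_nxt2F nxtK /det2 !mxE; ring.
have [->|inj] := eqVneq i (nxt j).
  by rewrite ?nxt_eqF ?eqxx addr0 /edge /det2 !mxE; ring.
by rewrite (inj_eq nxt_inj) (negbTE ij) addr0 /det2 !mxE !mul0r subrr.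
Qed.

Lemma polyfield_birkhoff_field j : polyfield (birkhoff_field j).
Proof.
move=> a c; have [->|aj] := eqVneq a j.
  apply: polyfun_ext (polyfun_mul (polyfun_turn j) (polyfun_edge (prv j) c)) => p.
  by rewrite !mxE ?eqxx ?mxE.
have [->|anj] := eqVneq a (nxt j).
  apply: polyfun_ext (polyfun_mul (polyfun_turn (prv j)) (polyfun_edge (nxt j) c)) => p.
  by rewrite !mxE ?nxt_eqF ?eqxx ?mxE.
by apply: polyfun_ext (polyfun_cst 0) => p; rewrite mxE (negbTE aj) (negbTE anj) mxE.
Qed.

Lemma F_field_birkhoff_field c z j : F_field c z (birkhoff_field j).
Proof.
exists setT; split=> //; first exact: openT.
  exact/polyfield_smooth/polyfield_birkhoff_field.
by move=> p _ _; exact: birkhoff_fieldP.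
Qed.

Lemma birkhoffF_span z W : (forall i, turn z i != 0) -> birkhoffF z W ->
  W = \sum_j (det2 (vtx W j) (edge z j) / (turn z (prv j) * turn z j)) *: birkhoff_field j z.
Proof.
move=> turn_nz FW; apply/row_matrixP => a; rewrite linear_sum /=.
rewrite (bigD1 a) //= (bigD1 (prv a)) /= ?prv_eqF // big1 ?addr0 => [|j /andP[ja jpa]].
  rewrite !linearZ /= -!/(vtx _ a) !vtx_birkhoff_field eqxx eq_sym prv_eqF prvK eqxx.
  have ta : turn z (prv a) = det2 (edge z (prv a)) (edge z a) by rewrite /turn prvK.
  have hc : det2 (vtx W (prv a)) (edge z (prv a)) = - det2 (vtx W a) (edge z (prv a)).
    apply/eqP; rewrite -subr_eq0 opprK; apply/eqP.
    by rewrite -[RHS](FW (prv a)) /edge prvK /det2 !mxE; ring.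
  (* the constraint on edge [a-1] fixes the [edge z a]-component of [W_a] *)
  have := turn_nz (prv a); rewrite ta => nz.
  rewrite {1}(det2_decomposition (vtx W a) nz) -ta !scalerA -scaleNr hc.
  by congr (_ *: _ + _ *: _); field; rewrite !turn_nz.
rewrite /= linearZ /= -/(vtx _ a) vtx_birkhoff_field eq_sym (negbTE ja) eq_nxt_prv eq_sym.
by rewrite (negbTE jpa) scaler0.
Qed.

Definition bracket_weight z j : R := - (turn z (prv j) * turn z j * turn z (nxt j)).

Lemma det2_birkhoff_field_nxt j k z :
  det2 (vtx (birkhoff_field j z) k) (vtx (birkhoff_field (nxt j) z) k) =
  if k == nxt j then bracket_weight z j else 0.
Proof.
rewrite !vtx_birkhoff_field nxtK.
have [->|kj] := eqVneq k (nxt j).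
  by rewrite nxt_eqF /bracket_weight /turn /det2 !mxE; ring.
have [->|kj'] := eqVneq k j; last by rewrite /det2 !mxE; ring.
by rewrite eq_nxt2F /det2 !mxE; ring.
Qed.

Lemma birkhoff_form_bracket j i z :
  birkhoff_form i z (lie (birkhoff_field j) (birkhoff_field (nxt j)) z) =
  2 * bracket_weight z j * ((i == j)%:R - (i == nxt j)%:R).
Proof.
have dX k : differentiable (birkhoff_field k) z.
  exact/differentiable_polyfield/polyfield_birkhoff_field.
rewrite (birkhoff_form_lie i (birkhoff_fieldP j) (birkhoff_fieldP (nxt j)) (dX j) (dX (nxt j))).
rewrite birkhoff_form_antisym !det2_birkhoff_field_nxt (inj_eq nxt_inj).
by case: (i == j); case: (i == nxt j); rewrite /=; ring.
Qed.

Lemma area_form_kernel_in_span c z W : (forall i, turn z i != 0) ->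
  area_form z W = 0 -> in_span (gen_set c z) W.
Proof.
move=> turn_nz zW0.
have w_nz j : 2 * bracket_weight z j != 0.
  by rewrite mulf_neq0 ?pnatr_eq0 // oppr_eq0 !mulf_neq0.
pose B j := lie (birkhoff_field j) (birkhoff_field (nxt j)) z.
have [d dE] := cyclic_difference (etrans (sum_birkhoff_form z W) zW0).
pose b j := d j / (2 * bracket_weight z j).
have bf_lin i : linear_for *%R (birkhoff_form i z) := birkhoff_form_linr i z.
have FW : birkhoffF z (W - \sum_j b j *: B j).
  move=> i; change (birkhoff_form i z (W - \sum_j b j *: B j) = 0).
  rewrite linear_formB // linear_form_sum //.
  under eq_bigr => j _ do rewrite linear_formZ // birkhoff_form_bracket mulrA divfK //.
  by rewrite sum_cyclic_difference dE subrr.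
rewrite -(subrK (\sum_j b j *: B j) W); apply: in_spanD.
  rewrite (birkhoffF_span turn_nz FW); do 3 eexists; split; last exact: erefl.
  by move=> j; left; exists (birkhoff_field j); split=> //; exact: F_field_birkhoff_field.
exists n, b, B; split=> // j; right; exists (birkhoff_field j), (birkhoff_field (nxt j)).
by split=> //; exact: F_field_birkhoff_field.
Qed.

End BirkhoffFields.

Theorem theorem2p5 (R : realType) (n : nat) (c : R) (z : ngon R n) :
  (3 <= n)%N -> c != 0 -> Mhyp c z ->
  (forall W, in_span (gen_set c z) W <-> tangentM z W).
Proof.
move=> n_ge3 c_nz Mz W; rewrite tangentME; split.
  by apply: in_span_linear_form (area_form_linr z) _ => v; exact: gen_set_tangent.
by case: Mz => /U_nE turn_nz _; exact: area_form_kernel_in_span.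
Qed.
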